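(* Consider a restless bandit, set system $(N^{\{0,1\}},\mathcal F)$ as in the context, suppose the bandit is PCL-indexable relative to $b^u$ and $\mathcal F$-policies, with the adaptive-greedy algorithm on input $\widehat{\mathbf h}^0_{N^{\{0,1\}}}$ producing $\boldsymbol\pi$ and $\boldsymbol\nu$, and let $S_k=\{\pi_k,\dots,\pi_n\}$. Suppose further that $w^S_j\le w^T_j$ whenever $j\in S\subset T$ with $S,T\in\mathcal F$. Then for every $j\in N^{\{0,1\}}$, $$\nu_j=\max\left\{\frac{v^{S\setminus\{j\}}_j-v^S_j}{b^S_j-b^{S\setminus\{j\}}_j}:j\in S\in\{S_1,\dots,S_n\}\right\}.$$
   Context: Restless bandit: finite state space $N=N^{\{0,1\}}\cup N^{\{1\}}$ (disjoint); actions $a\in\{0,1\}$; one-period costs $h^a_i$, transition probabilities $p^a_{ij}$ with $p^1_{ij}=p^0_{ij}$ for $i\in N^{\{1\}}$; discount factor $\beta\in(0,1)$; activity weights $\theta^1_j>0$. Stationary policies $u:N\to[0,1]$ with $u(i)=1$ on $N^{\{1\}}$. $v^u_i=E^u_i[\sum_{t\ge0}h^{a(t)}_{X(t)}\beta^t]$, $b^u_i=E^u_i[\sum_{t\ge0}\theta^1_{X(t)}a(t)\beta^t]$. For $S\subseteq N^{\{0,1\}}$ the $S$-active policy is active on $S\cup N^{\{1\}}$, passive elsewhere; $v^S_i,b^S_i$ its measures. Marginal workloads $w^S_i=\theta^1_i1\{i\in N^{\{0,1\}}\}+\beta\sum_j(p^1_{ij}-p^0_{ij})b^S_j$. $\widehat{\mathbf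 h}^0=\mathbf h^0-(\mathbf I-\beta\mathbf P^0)(\mathbf I-\beta\mathbf P^1)^{-1}\mathbf h^1$. $\mathcal F\subseteq2^{N^{\{0,1\}}}$: $\emptyset\in\mathcal F$; each nonempty $S\in\mathcal F$ has nonempty $\partial^-S=\{j\in S:S\setminus\{j\}\in\mathcal F\}$; each $S\in\mathcal F$ other than $N^{\{0,1\}}$ has $j\notin S$ with $S\cup\{j\}\in\mathcal F$. Adaptive-greedy algorithm on input $\mathbf c$, $n=|N^{\{0,1\}}|$: $S_1=N^{\{0,1\}}$, $y^{S_1}=\min\{c_j/w^{S_1}_j:j\in\partial^-S_1\}$, $\pi_1$ a minimizer, $\nu_{\pi_1}=y^{S_1}$; for $k=2..n$: $S_k=S_{k-1}\setminus\{\pi_{k-1}\}$, $y^{S_k}=\min\{(c_j-\sum_{l<k}y^{S_l}w^{S_l}_j)/w^{S_k}_j:j\in\partial^-S_k\}$, $\pi_k$ a minimizer, $\nu_{\pi_k}=\nu_{\pi_{k-1}}+y^{S_k}$. PCL-indexability: (i) $w^S_j>0$ for $S\in\mathcal F$, $j\in N^{\{0,1\}}$; (ii) on input $(\widehat h^0_j)_{j\in N^{\{0,1\}}}$ the output satisfies $\nu_{\pi_1}\le\cdots\le\nu_{\pi_n}$. *)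

From HB Require Import structures.
From mathcomp Require Import all_boot all_order all_algebra.
From mathcomp Require Import all_classical all_reals all_analysis.
Set Implicit Arguments. Unset Strict Implicit. Unset Printing Implicit Defensive.
Import Order.TTheory GRing.Theory Num.Theory.
Local Open Scope ring_scope.

(* State space N = 'I_m ; N1 = N^{1} ; N^{0,1} = ~: N1. *)

Section RB.
Variables (R : realType) (m : nat).

(* Expected total discounted value  E_i[ sum_t beta^t r(X t) ]  of the Markov
   chain with transition matrix P, started at i:  E_i[r(X t)] = (P^t r)_i. *)
Definition disc_sum (beta : R) (P : 'M[R]_m) (r : 'I_m -> R) (i : 'I_m) : R :=
  limn (fun T : nat => \sum_(t < T) beta ^+ t * \sum_(j < m) (P ^+ t) i j * r j).

Definition polP (N1 S : {set 'I_m}) (P0 P1 : 'M[R]_m) : 'M[R]_m :=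
  \matrix_(i, j) (if i \in S :|: N1 then P1 i j else P0 i j).

Definition vS (beta : R) (N1 : {set 'I_m}) (P0 P1 : 'M[R]_m) (h0 h1 : 'I_m -> R)
  (S : {set 'I_m}) (i : 'I_m) : R :=
  disc_sum beta (polP N1 S P0 P1) (fun j => if j \in S :|: N1 then h1 j else h0 j) i.

Definition bS (beta : R) (N1 : {set 'I_m}) (P0 P1 : 'M[R]_m) (theta : 'I_m -> R)
  (S : {set 'I_m}) (i : 'I_m) : R :=
  disc_sum beta (polP N1 S P0 P1) (fun j => if j \in S :|: N1 then theta j else 0) i.

Definition wS (beta : R) (N1 : {set 'I_m}) (P0 P1 : 'M[R]_m) (theta : 'I_m -> R)
  (S : {set 'I_m}) (i : 'I_m) : R :=
  (if i \in ~: N1 then theta i else 0)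
  + beta * \sum_(j < m) (P1 i j - P0 i j) * bS beta N1 P0 P1 theta S j.

Definition hhat0 (beta : R) (P0 P1 : 'M[R]_m) (h0 h1 : 'I_m -> R) : 'I_m -> R :=
  let h0v : 'cV[R]_m := \col_i h0 i in
  let h1v : 'cV[R]_m := \col_i h1 i in
  let hv := h0v - (1%:M - beta *: P0) *m invmx (1%:M - beta *: P1) *m h1v in
  fun j => hv j 0.

Definition set_system (N1 : {set 'I_m}) (F : pred {set 'I_m}) : Prop :=
  [/\ forall S, F S -> S \subset ~: N1,
      F finset.set0,
      forall S, F S -> S != finset.set0 -> exists2 j, j \in S & F (S :\ j) &
      forall S, F S -> S != ~: N1 -> exists2 j, j \notin S & F (j |: S)].

Definition bdry (F : pred {set 'I_m}) (S : {set 'I_m}) : {set 'I_m} :=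
  [set j in S | F (S :\ j)].

(* S_{k+1} = N^{0,1} \ {pi_0, ..., pi_{k-1}}  (0-based indices k) *)
Definition Sk (N01 : {set 'I_m}) (pi : nat -> 'I_m) (k : nat) : {set 'I_m} :=
  N01 :\: \bigcup_(l < k) [set pi l].

(* (pi, y, nu) is an output of the adaptive-greedy algorithm on input c
   (0-based: pi k = pi_{k+1}, y k = y^{S_{k+1}}). *)
Definition adaptive_greedy (N1 : {set 'I_m}) (F : pred {set 'I_m})
  (w : {set 'I_m} -> 'I_m -> R) (c : 'I_m -> R)
  (pi : nat -> 'I_m) (y : nat -> R) (nu : 'I_m -> R) : Prop :=
  let N01 := ~: N1 in
  let S := Sk N01 pi in
  let ratio k j := (c j - \sum_(l < k) y l * w (S l) j) / w (S k) j in
  forall k, (k < #|N01|)%N ->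
    [/\ pi k \in bdry F (S k),
        y k = ratio k (pi k),
        (forall j, j \in bdry F (S k) -> y k <= ratio k j) &
        nu (pi k) = \sum_(l < k.+1) y l].

Definition PCL_indexable (beta : R) (N1 : {set 'I_m}) (P0 P1 : 'M[R]_m)
  (h0 h1 theta : 'I_m -> R) (F : pred {set 'I_m}) : Prop :=
  let w := wS beta N1 P0 P1 theta in
  (forall S, F S -> forall j, j \in ~: N1 -> 0 < w S j) /\
  (forall pi y nu, adaptive_greedy N1 F w (hhat0 beta P0 P1 h0 h1) pi y nu ->
     forall k, (k.+1 < #|~: N1|)%N -> nu (pi k) <= nu (pi k.+1)).

Definition restless_bandit (beta : R) (N1 : {set 'I_m}) (P0 P1 : 'M[R]_m)
  (theta : 'I_m -> R) : Prop :=
  [/\ 0 < beta < 1,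
      forall i j, 0 <= P0 i j /\ 0 <= P1 i j,
      forall i, \sum_(j < m) P0 i j = 1 /\ \sum_(j < m) P1 i j = 1,
      forall i j, i \in N1 -> P1 i j = P0 i j &
      forall j, 0 < theta j].

End RB.

(* Both v^S and b^S solve Bellman equations (I - beta P^S) x = r^S, and
   I - beta P^S satisfies a maximum principle.  Removing j from S changes P^S
   only in row j, so I - beta P^(S\j) maps v^(S\j) - v^S and b^S - b^(S\j) to
   point masses at j of sizes c^S_j (the marginal cost) and w^S_j.  Hence
   v^(S\j) - v^S = (c^S_j / w^S_j) (b^S - b^(S\j)): the ratio of the theorem
   is the marginal productivity rate c^S_j / w^S_j, and
   c^(S\j) = c^S + (c^S_j / w^S_j) (w^(S\j) - w^S).  Since c^(N^{0,1}) = hhat^0,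
   this recursion makes the adaptive-greedy index nu_(pi_k) equal to
   c^(S_k)_(pi_k) / w^(S_k)_(pi_k).  For j = pi_K the quantity
   c^(S_k)_j - nu_j w^(S_k)_j vanishes at k = K and does not increase as k goes
   down, because nu_(pi_k) <= nu_j and w^(S_(k+1))_j <= w^(S_k)_j; so the ratio
   at every S_k containing j is at most nu_j. *)

From HB Require Import structures.
From mathcomp Require Import all_boot all_order all_algebra.
From mathcomp Require Import boolp classical_sets reals topology normedtype sequences.
From mathcomp Require Import ring lra zify.
Import Order.TTheory GRing.Theory Num.Theory numFieldNormedType.Exports.
Set Implicit Arguments. Unset Strict Implicit. Unset Printing Implicit Defensive.
Local Open Scope ring_scope.

Section DiscountedSum.
Variables (R : realType) (m : nat) (beta : R) (P : 'M[R]_m).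
Hypothesis beta01 : 0 < beta < 1.
Hypothesis P_ge0 : forall i j, 0 <= P i j.
Hypothesis P_row1 : forall i, \sum_(j < m) P i j = 1.

Let beta_ge0 : 0 <= beta. Proof. by case/andP: beta01 => /ltW. Qed.

Lemma superharmonic_ge0 (u : 'I_m -> R) :
  (forall i, beta * \sum_(j < m) P i j * u j <= u i) -> forall i, 0 <= u i.
Proof.
move=> Hu i; have [k _ k_min] := @arg_minP _ R _ i xpredT u isT.
have uk_le : u k <= \sum_(j < m) P k j * u j.
  rewrite -[leLHS]mul1r -(P_row1 k) mulr_suml.
  by apply: ler_sum => j _; apply: ler_wpM2l => //; apply: k_min.
have uk_ge0 : 0 <= u k.
  have : beta * u k <= u k by apply: le_trans (Hu k); apply: ler_wpM2l.
  by case/andP: beta01 => _ b1; nra.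
exact: le_trans uk_ge0 (k_min _ isT).
Qed.

Lemma harmonic_eq0 (u : 'I_m -> R) :
  (forall i, u i = beta * \sum_(j < m) P i j * u j) -> forall i, u i = 0.
Proof.
move=> Hu i; apply/eqP; rewrite eq_le -oppr_ge0; apply/andP; split; last first.
  by apply: superharmonic_ge0 => k; rewrite -Hu.
apply: (@superharmonic_ge0 (fun i => - u i)) => k.
by under eq_bigr do rewrite mulrN; rewrite sumrN mulrN -Hu.
Qed.

Lemma discount_unitmx : 1%:M - beta *: P \in unitmx.
Proof.
rewrite unitmxE unitfE -det_tr; apply/negP => /det0P [v v_neq0].
rewrite -[v]trmxK -trmx_mul => /(congr1 trmx); rewrite trmxK trmx0 => Av0.
have /harmonic_eq0 v0 : forall i, v^T i 0 = beta * \sum_(j < m) P i j * v^T j 0.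
  move=> i; move/matrixP/(_ i 0): Av0.
  by rewrite mulmxBl mul1mx -scalemxAl !mxE => /eqP; rewrite subr_eq0 => /eqP ->.
by move/eqP: v_neq0; apply; apply/matrixP => a b; rewrite (ord1 a) !mxE -(v0 b) mxE.
Qed.

Lemma mxpow_col_norm_le (x : 'cV[R]_m) T i :
  `|((P ^+ T) *m x) i 0| <= \sum_(j < m) `|x j 0|.
Proof.
elim: T i => [|T IHT] i.
  by rewrite expr0 mul1mx (bigD1 i) //= lerDl sumr_ge0.
rewrite exprS -mulmxE -mulmxA mxE; apply: le_trans (ler_norm_sum _ _ _) _.
apply: le_trans (_ : \sum_(j < m) P i j * \sum_(k < m) `|x k 0| <= _).
  by apply: ler_sum => j _; rewrite normrM ger0_norm // ler_wpM2l.
by rewrite -mulr_suml P_row1 mul1r.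
Qed.

Lemma disc_sum_partial (r : 'I_m -> R) T i :
  let x := invmx (1%:M - beta *: P) *m \col_j r j in
  \sum_(t < T) beta ^+ t * \sum_(j < m) (P ^+ t) i j * r j
  = x i 0 - beta ^+ T * ((P ^+ T) *m x) i 0.
Proof.
move=> x; have r_col : \col_j r j = x - beta *: (P *m x).
  have : (1%:M - beta *: P) *m x = \col_j r j.
    by rewrite mulmxA mulmxV ?discount_unitmx ?mul1mx.
  by rewrite mulmxBl mul1mx -scalemxAl => <-.
(* Telescoping: as r = (I - beta P) x, the t-th term is
   beta^t P^t x - beta^(t+1) P^(t+1) x. *)
clearbody x; elim: T => [|T IHT]; first by rewrite big_ord0 expr0 mul1r mul1mx subrr.
rewrite big_ord_recr /= IHT.
have -> : \sum_(j < m) (P ^+ T) i j * r j = (P ^+ T *m \col_j r j) i 0.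
  by rewrite mxE; apply: eq_bigr => j _; rewrite mxE.
rewrite r_col mulmxBr -scalemxAr mulmxA.
have -> : P ^+ T *m P = P ^+ T.+1 by rewrite exprSr.
by rewrite !mxE (exprS beta); ring.
Qed.

Lemma disc_sumE (r : 'I_m -> R) i :
  disc_sum beta P r i = (invmx (1%:M - beta *: P) *m \col_j r j) i 0.
Proof.
set x := invmx _ *m _; rewrite /disc_sum.
under eq_fun do rewrite disc_sum_partial -/x.
apply: cvg_lim; first exact: Rhausdorff.
set M := \sum_(j < m) `|x j 0|.
have bound_cvg : (beta ^+ T * M @[T --> \oo] --> 0)%classic.
  rewrite -(mul0r M); apply: cvgMl; apply: cvg_expr.
  by rewrite ger0_norm //; case/andP: beta01.
have err_cvg : (beta ^+ T * ((P ^+ T) *m x) i 0 @[T --> \oo] --> 0)%classic.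
  apply: (@squeeze_cvgr _ _ _ _ (fun T => - (beta ^+ T * M)) (fun T => beta ^+ T * M)).
  - apply: nearW => T; rewrite -ler_norml normrM ger0_norm ?exprn_ge0 //.
    by rewrite ler_wpM2l ?exprn_ge0 ?mxpow_col_norm_le.
  - by rewrite -oppr0; apply: cvgN.
  - exact: bound_cvg.
by have := cvgB (cvg_cst (x i 0)) err_cvg; rewrite subr0; apply.
Qed.

Lemma disc_sum_bellman (r : 'I_m -> R) i :
  disc_sum beta P r i = r i + beta * \sum_(j < m) P i j * disc_sum beta P r j.
Proof.
rewrite disc_sumE; under eq_bigr do rewrite disc_sumE.
set x := invmx _ *m _.
have /matrixP/(_ i 0) : (1%:M - beta *: P) *m x = \col_j r j.
  by rewrite mulmxA mulmxV ?discount_unitmx ?mul1mx.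
by rewrite mulmxBl mul1mx -scalemxAl !mxE => <-; rewrite subrK.
Qed.

End DiscountedSum.

Section Bandit.
Variables (R : realType) (m : nat) (N1 : {set 'I_m}) (P0 P1 : 'M[R]_m)
  (h0 h1 theta : 'I_m -> R) (beta : R).
Hypothesis rb : restless_bandit beta N1 P0 P1 theta.

Local Notation PS S := (polP N1 S P0 P1).
Local Notation V S := (vS beta N1 P0 P1 h0 h1 S).
Local Notation B S := (bS beta N1 P0 P1 theta S).
Local Notation W S := (wS beta N1 P0 P1 theta S).

Definition marginal_cost (S : {set 'I_m}) (i : 'I_m) : R :=
  h0 i - h1 i - beta * \sum_(k < m) (P1 i k - P0 i k) * V S k.

Definition disc_op (S : {set 'I_m}) (f : 'I_m -> R) (i : 'I_m) : R :=
  f i - beta * \sum_(k < m) PS S i k * f k.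

Let beta01 : 0 < beta < 1. Proof. by case: rb. Qed.

Lemma polPE S i k : PS S i k = if i \in S :|: N1 then P1 i k else P0 i k.
Proof. by rewrite mxE. Qed.

Lemma polP_ge0 S i k : 0 <= PS S i k.
Proof. by case: rb => _ P_ge0 _ _ _; rewrite polPE; case: ifP => _; case: (P_ge0 i k). Qed.

Lemma polP_row1 S i : \sum_(k < m) PS S i k = 1.
Proof.
case: rb => _ _ P_row1 _ _; under eq_bigr do rewrite polPE.
by case: (i \in S :|: N1); case: (P_row1 i).
Qed.

Lemma disc_op_vS S i : disc_op S (V S) i = if i \in S :|: N1 then h1 i else h0 i.
Proof. by rewrite /disc_op {1}/vS (disc_sum_bellman beta01 (polP_ge0 S) (polP_row1 S)) addrK. Qed.

Lemma disc_op_bS S i : disc_op S (B S) i = if i \in S :|: N1 then theta i else 0.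
Proof. by rewrite /disc_op {1}/bS (disc_sum_bellman beta01 (polP_ge0 S) (polP_row1 S)) addrK. Qed.

Lemma disc_op_ge0 S f : (forall i, 0 <= disc_op S f i) -> forall i, 0 <= f i.
Proof.
move=> Lf_ge0; apply: (superharmonic_ge0 beta01 (polP_ge0 S) (polP_row1 S)) => i.
by rewrite -subr_ge0; apply: Lf_ge0.
Qed.

Lemma disc_op_eq0 S f : (forall i, disc_op S f i = 0) -> forall i, f i = 0.
Proof.
move=> Lf0; apply: (harmonic_eq0 beta01 (polP_ge0 S) (polP_row1 S)) => i.
by apply/eqP; rewrite -subr_eq0; apply/eqP; apply: Lf0.
Qed.

Lemma disc_opB S f g i :
  disc_op S (fun k => f k - g k) i = disc_op S f i - disc_op S g i.
Proof. by rewrite /disc_op; under eq_bigr do rewrite mulrBr; rewrite sumrB; ring. Qed.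

Lemma disc_opZ S a f i : disc_op S (fun k => a * f k) i = a * disc_op S f i.
Proof. by rewrite /disc_op; under eq_bigr do rewrite mulrCA; rewrite -mulr_sumr; ring. Qed.

Lemma disc_op_delta_scale S j f g a b :
  (forall i, disc_op S f i = if i == j then a else 0) ->
  (forall i, disc_op S g i = if i == j then b else 0) ->
  b != 0 -> forall i, f i = a / b * g i.
Proof.
move=> Lf Lg b_neq0 i; apply/eqP; rewrite -subr_eq0; apply/eqP; move: i.
apply: (@disc_op_eq0 S (fun k => f k - a / b * g k)) => i.
by rewrite disc_opB disc_opZ Lf Lg; case: eqP => _; rewrite ?(divfK b_neq0) ?mulr0 subrr.
Qed.

Section RemoveState.
Variables (S : {set 'I_m}) (j : 'I_m).
Hypotheses (jS : j \in S) (jN1 : j \notin N1).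

Lemma disc_op_setD1 f i :
  disc_op (S :\ j) f i
  = disc_op S f i + (if i == j then beta * \sum_(k < m) (P1 j k - P0 j k) * f k else 0).
Proof.
rewrite /disc_op; under eq_bigr do rewrite polPE; under [in RHS]eq_bigr do rewrite polPE.
case: eqVneq => [->|ij]; last by rewrite addr0 !inE ij.
rewrite !inE eqxx jS (negbTE jN1) /=.
by under [X in _ = _ + _ * X]eq_bigr do rewrite mulrBl; rewrite sumrB; ring.
Qed.

Lemma disc_op_bS_setD1 i :
  disc_op (S :\ j) (fun k => B S k - B (S :\ j) k) i = if i == j then W S j else 0.
Proof.
rewrite disc_opB (disc_op_setD1 (B S)) !disc_op_bS /wS.
case: eqVneq => [->|ij]; last by rewrite addr0 !inE ij subrr.
by rewrite !inE eqxx jS (negbTE jN1) /=; ring.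
Qed.

Lemma disc_op_vS_setD1 i :
  disc_op (S :\ j) (fun k => V (S :\ j) k - V S k) i
  = if i == j then marginal_cost S j else 0.
Proof.
rewrite disc_opB (disc_op_setD1 (V S)) !disc_op_vS /marginal_cost.
case: eqVneq => [->|ij]; last by rewrite addr0 !inE ij subrr.
by rewrite !inE eqxx jS (negbTE jN1) /=; ring.
Qed.

Lemma bS_setD1_gt0 : 0 < W S j -> 0 < B S j - B (S :\ j) j.
Proof.
move=> w_gt0; set z := fun k => B S k - B (S :\ j) k.
have z_ge0 : forall k, 0 <= z k.
  apply: (@disc_op_ge0 (S :\ j)) => i; rewrite disc_op_bS_setD1.
  by case: eqP => _; [exact: ltW | exact: lexx].
have zj : z j = W S j + beta * \sum_(k < m) PS (S :\ j) j k * z k.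
  by have := disc_op_bS_setD1 j; rewrite eqxx => <-; rewrite /disc_op subrK.
have : 0 <= beta * \sum_(k < m) PS (S :\ j) j k * z k.
  rewrite mulr_ge0 ?sumr_ge0 // => [|k _]; last by rewrite mulr_ge0 ?polP_ge0.
  by case/andP: beta01 => /ltW.
rewrite -/(z j); lra.
Qed.

Lemma vS_setD1 i : W S j != 0 ->
  V (S :\ j) i - V S i = marginal_cost S j / W S j * (B S i - B (S :\ j) i).
Proof.
move=> w_neq0; move: i.
exact: (@disc_op_delta_scale (S :\ j) j (fun k => V (S :\ j) k - V S k)
  (fun k => B S k - B (S :\ j) k) _ _ disc_op_vS_setD1 disc_op_bS_setD1).
Qed.

Lemma marginal_cost_setD1 l : W S j != 0 ->
  marginal_cost (S :\ j) l
  = marginal_cost S l + marginal_cost S j / W S j * (W (S :\ j) l - W S l).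
Proof.
move=> w_neq0; set r := marginal_cost S j / W S j.
have shift : \sum_(k < m) (P1 l k - P0 l k) * V (S :\ j) k
    = \sum_(k < m) (P1 l k - P0 l k) * V S k
      + r * (\sum_(k < m) (P1 l k - P0 l k) * B S k
             - \sum_(k < m) (P1 l k - P0 l k) * B (S :\ j) k).
  rewrite -sumrB mulr_sumr -big_split /=; apply: eq_bigr => k _.
  have := vS_setD1 k w_neq0; rewrite -/r => dV.
  have -> : V (S :\ j) k = V S k + r * (B S k - B (S :\ j) k) by rewrite -dV; ring.
  ring.
by rewrite /marginal_cost /wS shift; ring.
Qed.

Lemma vS_bS_ratio : 0 < W S j ->
  (V (S :\ j) j - V S j) / (B S j - B (S :\ j) j) = marginal_cost S j / W S j.
Proof. by move=> w_gt0; rewrite vS_setD1 ?gt_eqF // mulfK // gt_eqF // bS_setD1_gt0. Qed.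

End RemoveState.

Lemma marginal_cost_full l : marginal_cost (~: N1) l = hhat0 beta P0 P1 h0 h1 l.
Proof.
have full i : i \in ~: N1 :|: N1 by rewrite !inE orNb.
have V_bellman i : V (~: N1) i = h1 i + beta * \sum_(k < m) P1 i k * V (~: N1) k.
  have := disc_op_vS (~: N1) i; rewrite full /disc_op => <-.
  by under eq_bigr do rewrite polPE full; rewrite subrK.
have [P1_ge0 P1_row1] : (forall i k, 0 <= P1 i k) /\ (forall i, \sum_(k < m) P1 i k = 1).
  by case: rb => _ P_ge0 P_row1 _ _; split=> [i k | i]; [case: (P_ge0 i k) | case: (P_row1 i)].
have V_col : (1%:M - beta *: P1) *m (\col_i V (~: N1) i) = \col_i h1 i.
  rewrite mulmxBl mul1mx -scalemxAl; apply/matrixP => i k.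
  rewrite (ord1 k) !mxE; under [X in _ - _ * X]eq_bigr do rewrite mxE.
  by rewrite (V_bellman i) addrK.
rewrite /hhat0 /= -V_col -mulmxA mulKmx ?(discount_unitmx beta01) //.
rewrite mulmxBl mul1mx -scalemxAl !mxE /marginal_cost (V_bellman l).
under [X in _ = _ - (_ - _ * X)]eq_bigr do rewrite mxE.
by rewrite (eq_bigr _ (fun k _ => mulrBl _ _ _)) sumrB; ring.
Qed.

End Bandit.

Lemma Sk0 m (N01 : {set 'I_m}) (pi : nat -> 'I_m) : Sk N01 pi 0 = N01.
Proof. by rewrite /Sk big_ord0 finset.setD0. Qed.

Lemma SkS m (N01 : {set 'I_m}) (pi : nat -> 'I_m) k :
  Sk N01 pi k.+1 = Sk N01 pi k :\ pi k.
Proof. by rewrite /Sk big_ord_recr finset.setDDl. Qed.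

Lemma Sk_subset m (N01 : {set 'I_m}) (pi : nat -> 'I_m) k k' :
  (k <= k')%N -> Sk N01 pi k' \subset Sk N01 pi k.
Proof.
move/subnK <-; elim: (k' - k)%N => [|d IHd]; first by rewrite add0n.
by rewrite addSn SkS; apply: fintype.subset_trans IHd; apply: subD1set.
Qed.

Lemma set_system_full m (N1 : {set 'I_m}) (F : pred {set 'I_m}) :
  set_system N1 F -> F (~: N1).
Proof.
case=> F_sub F0 _ F_ext.
have grow d : (d <= #|~: N1|)%N -> exists2 T, F T & (d <= #|T|)%N.
  elim: d => [|d IHd] d_le; first by exists finset.set0.
  have [T FT d_leT] := IHd (ltnW d_le).
  have [T_full|T_neq] := eqVneq T (~: N1); first by rewrite T_full in FT; exists (~: N1).
  have [x xT Fx] := F_ext T FT T_neq; exists (x |: T) => //.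
  by rewrite cardsU1 xT add1n ltnS.
have [T FT T_ge] := grow _ (leqnn _).
by have /eqP <- : T == ~: N1 by rewrite eqEcard F_sub.
Qed.

Section AdaptiveGreedy.
Variables (R : realType) (m : nat) (N1 : {set 'I_m}) (F : pred {set 'I_m})
  (w c : {set 'I_m} -> 'I_m -> R) (c0 : 'I_m -> R)
  (pi : nat -> 'I_m) (y : nat -> R) (nu : 'I_m -> R).
Hypothesis F_sys : set_system N1 F.
Hypothesis w_gt0 : forall S, F S -> forall j, j \in ~: N1 -> 0 < w S j.
Hypothesis c_setD1 : forall S j l, F S -> j \in S ->
  c (S :\ j) l = c S l + c S j / w S j * (w (S :\ j) l - w S l).
Hypothesis c_full : forall l, c (~: N1) l = c0 l.
Hypothesis greedy : adaptive_greedy N1 F w c0 pi y nu.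

Local Notation n := #|~: N1|.
Local Notation S := (Sk (~: N1) pi).

Lemma greedy_pi_mem k : (k < n)%N -> pi k \in S k.
Proof. by case/greedy; rewrite inE => /andP []. Qed.

Lemma greedy_family k : (k <= n)%N -> F (S k).
Proof.
case: k => [_|k /greedy []]; first by rewrite Sk0; exact: set_system_full F_sys.
by rewrite inE SkS => /andP [].
Qed.

Lemma greedy_w_gt0 k j : (k < n)%N -> j \in S k -> 0 < w (S k) j.
Proof.
move=> k_lt jS; apply: w_gt0; first exact: greedy_family (ltnW k_lt).
exact: fintype.subsetP (subsetDl _ _) _ jS.
Qed.

Lemma greedy_yE k : (k < n)%N ->
  (forall l, c0 l - \sum_(i < k) y i * w (S i) l
             = c (S k) l - (\sum_(i < k) y i) * w (S k) l) ->
  y k = c (S k) (pi k) / w (S k) (pi k) - \sum_(i < k) y i.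
Proof.
move=> k_lt inv; have [_ -> _ _] := greedy k_lt.
by rewrite inv mulrBl mulfK // gt_eqF // greedy_w_gt0 // greedy_pi_mem.
Qed.

Lemma greedy_invariant k : (k <= n)%N -> forall l,
  c0 l - \sum_(i < k) y i * w (S i) l = c (S k) l - (\sum_(i < k) y i) * w (S k) l.
Proof.
elim: k => [_ l|k IHk k_lt l]; first by rewrite !big_ord0 mul0r !subr0 Sk0 c_full.
have IHk' := IHk (ltnW k_lt).
rewrite !big_ord_recr /= opprD addrA IHk' SkS c_setD1 ?greedy_pi_mem ?greedy_family ?(ltnW k_lt) //.
by rewrite (greedy_yE k_lt IHk'); ring.
Qed.

Lemma greedy_index k : (k < n)%N -> nu (pi k) = c (S k) (pi k) / w (S k) (pi k).
Proof.
move=> k_lt; have [_ _ _ ->] := greedy k_lt.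
by rewrite big_ord_recr /= (greedy_yE k_lt (greedy_invariant (ltnW k_lt))); ring.
Qed.

Lemma card_greedy_Sk k : (k <= n)%N -> #|S k| = (n - k)%N.
Proof.
elim: k => [_|k IHk k_lt]; first by rewrite Sk0 subn0.
have := cardsD1 (pi k) (S k); rewrite greedy_pi_mem // IHk 1?ltnW // -SkS add1n.
by rewrite subnS => ->.
Qed.

Lemma greedy_mem j : j \in ~: N1 ->
  exists2 K, (K < n)%N & pi K = j /\ forall k, (j \in S k) = (k <= K)%N.
Proof.
move=> jN; have j_out : j \notin S n.
  have /eqP := card_greedy_Sk (leqnn n).
  by rewrite subnn cards_eq0 => /eqP ->; rewrite inE.
have [[|K]] := ex_minnP (ex_intro (fun k => j \notin S k) n j_out).
  by rewrite Sk0 jN.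
move=> jK1 K_min; have K_lt : (K < n)%N by apply: K_min.
have jK : j \in S K by apply/negPn/negP => /K_min; rewrite ltnn.
exists K => //; split.
  by move: jK1; rewrite SkS in_setD1 jK andbT negbK => /eqP.
move=> k; apply/idP/idP => [jk | k_le]; last exact: fintype.subsetP (Sk_subset _ _ k_le) _ jK.
apply: contraLR jk; rewrite -ltnNge => /Sk_subset/fintype.subsetP sub.
by apply/negP => /sub; apply/negP.
Qed.

Hypothesis nu_step : forall k, (k.+1 < n)%N -> nu (pi k) <= nu (pi k.+1).

Lemma greedy_index_mono k k' : (k <= k')%N -> (k' < n)%N -> nu (pi k) <= nu (pi k').
Proof.
move/subnK <-; elim: (k' - k)%N => [|d IHd] lt_n; first by rewrite add0n.
by rewrite addSn in lt_n *; exact: le_trans (IHd (ltnW lt_n)) (nu_step lt_n).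
Qed.

Hypothesis w_mono : forall S T j, F S -> F T -> S \subset T -> j \in S -> w S j <= w T j.

Lemma greedy_ratio_le_index K k : (K < n)%N -> (k <= K)%N ->
  c (S k) (pi K) / w (S k) (pi K) <= nu (pi K).
Proof.
move=> K_lt k_le.
have piK_mem k' : (k' <= K)%N -> pi K \in S k'.
  by move=> le; exact: fintype.subsetP (Sk_subset _ _ le) _ (greedy_pi_mem K_lt).
have gap d k' : (k' + d = K)%N -> c (S k') (pi K) - nu (pi K) * w (S k') (pi K) <= 0.
  elim: d k' => [|d IHd] k' eqK.
    move: eqK; rewrite addn0 => ->; rewrite greedy_index // divfK ?subrr //.
    by rewrite gt_eqF // greedy_w_gt0 // piK_mem.
  have k'_lt : (k' < K)%N by rewrite -eqK -addSnnS leq_addr.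
  have k'_n := ltn_trans k'_lt K_lt.
  have := IHd k'.+1; rewrite addSnnS => /(_ eqK).
  rewrite SkS c_setD1 ?greedy_pi_mem ?greedy_family ?(ltnW k'_n) // -SkS.
  have r_le : c (S k') (pi k') / w (S k') (pi k') <= nu (pi K).
    by rewrite -greedy_index ?greedy_index_mono // ltnW.
  have w_le : w (S k'.+1) (pi K) <= w (S k') (pi K).
    by apply: w_mono; rewrite ?greedy_family ?Sk_subset ?piK_mem // ltnW.
  have : 0 <= (nu (pi K) - c (S k') (pi k') / w (S k') (pi k'))
              * (w (S k') (pi K) - w (S k'.+1) (pi K)).
    by rewrite mulr_ge0 // subr_ge0.
  lra.
have w_pos : 0 < w (S k) (pi K).
  by rewrite greedy_w_gt0 ?piK_mem // (leq_ltn_trans k_le K_lt).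
by rewrite ler_pdivrMr // -subr_le0 (gap (K - k)%N) // subnKC.
Qed.

End AdaptiveGreedy.
Theorem theorem11 (R : realType) (m : nat) (N1 : {set 'I_m})
  (P0 P1 : 'M[R]_m) (h0 h1 theta : 'I_m -> R) (beta : R)
  (F : pred {set 'I_m}) (pi : nat -> 'I_m) (y : nat -> R) (nu : 'I_m -> R) :
  restless_bandit beta N1 P0 P1 theta ->
  set_system N1 F ->
  PCL_indexable beta N1 P0 P1 h0 h1 theta F ->
  adaptive_greedy N1 F (wS beta N1 P0 P1 theta) (hhat0 beta P0 P1 h0 h1) pi y nu ->
  (forall S T j, F S -> F T -> S \subset T -> j \in S ->
     wS beta N1 P0 P1 theta S j <= wS beta N1 P0 P1 theta T j) ->
  forall j, j \in ~: N1 ->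
    let ratio S := (vS beta N1 P0 P1 h0 h1 (S :\ j) j - vS beta N1 P0 P1 h0 h1 S j)
                   / (bS beta N1 P0 P1 theta S j - bS beta N1 P0 P1 theta (S :\ j) j) in
    (exists2 k, (k < #|~: N1|)%N & j \in Sk (~: N1) pi k /\ nu j = ratio (Sk (~: N1) pi k)) /\
    (forall k, (k < #|~: N1|)%N -> j \in Sk (~: N1) pi k -> ratio (Sk (~: N1) pi k) <= nu j).
Proof.
move=> rb F_sys [w_gt0 nu_step] greedy w_mono j jN ratio.
have [F_sub _ _ _] := F_sys.
pose c := marginal_cost N1 P0 P1 h0 h1 beta.
have c_setD1 S i l : F S -> i \in S -> c (S :\ i) l
    = c S l + c S i / wS beta N1 P0 P1 theta S i
              * (wS beta N1 P0 P1 theta (S :\ i) l - wS beta N1 P0 P1 theta S l).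
  move=> FS iS; have iN := fintype.subsetP (F_sub S FS) i iS.
  apply: (marginal_cost_setD1 h0 h1 rb iS); first by move: iN; rewrite inE.
  by rewrite gt_eqF ?w_gt0.
have ratioE k : (k < #|~: N1|)%N -> j \in Sk (~: N1) pi k ->
    ratio (Sk (~: N1) pi k) = c (Sk (~: N1) pi k) j / wS beta N1 P0 P1 theta (Sk (~: N1) pi k) j.
  move=> k_lt jS; apply: (vS_bS_ratio h0 h1 rb jS); first by move: jN; rewrite inE.
  by rewrite w_gt0 ?(greedy_family F_sys greedy (ltnW k_lt)).
have [K K_lt [piK memK]] := greedy_mem greedy jN.
split.
  exists K => //; split; first by rewrite memK.
  by rewrite ratioE ?memK // -piK (greedy_index F_sys w_gt0 c_setD1 (marginal_cost_full h0 h1 rb) greedy K_lt).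
move=> k k_lt jk; rewrite ratioE // -piK.
apply: (greedy_ratio_le_index F_sys w_gt0 c_setD1 (marginal_cost_full h0 h1 rb) greedy
  (nu_step _ _ _ greedy) w_mono K_lt).
by rewrite -memK.
Qed.
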